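(* Let $K$ be a compact space, $|\cdot|$ a norm on $\mathbb{R}^n$, $f\colon K\to\mathbb{R}^n$ a continuous function and $\alpha>0$. Then every $\alpha$-perturbation of $f$ has a root in $K$ if and only if the restriction $f|_{|f|^{-1}(\{\alpha\})}$ cannot be extended to a continuous map $|f|^{-1}([0,\alpha])\to\mathbb{R}^n\setminus\{0\}$.
   Context: Here $|f|\colon K\to[0,\infty)$ denotes $x\mapsto|f(x)|$. An $\alpha$-perturbation of $f$ is a continuous function $g\colon K\to\mathbb{R}^n$ with $\max_{x\in K}|g(x)-f(x)|\le\alpha$. *)

From HB Require Import structures.
From mathcomp Require Import all_boot all_order all_algebra.
From mathcomp Require Import all_classical all_reals all_analysis.
Set Implicit Arguments. Unset Strict Implicit. Unset Printing Implicit Defensive.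
Import Order.TTheory GRing.Theory Num.Theory.
Import numFieldNormedType.Exports.
Local Open Scope ring_scope.

Definition is_norm (R : realType) (n : nat) (N : 'rV[R]_n -> R) : Prop :=
  [/\ forall x : 'rV[R]_n, N x = 0 -> x = 0,
      forall (a : R) (x : 'rV[R]_n), N (a *: x) = `|a| * N x
    & forall x y : 'rV[R]_n, N (x + y) <= N x + N y].

Definition perturbation (R : realType) (n : nat) (K : topologicalType)
  (N : 'rV[R]_n -> R) (alpha : R) (f g : K -> 'rV[R]_n) : Prop :=
  continuous g /\ forall x : K, N (g x - f x) <= alpha.

From HB Require Import structures.
From mathcomp Require Import all_boot all_order all_algebra.
From mathcomp Require Import all_classical all_reals all_analysis.
From mathcomp Require Import lra.
Set Implicit Arguments. Unset Strict Implicit. Unset Printing Implicit Defensive.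
Import Order.TTheory GRing.Theory Num.Theory.
Import numFieldNormedType.Exports.
Local Open Scope ring_scope.
Local Open Scope classical_set_scope.

(* If [h] extends [f] from the sphere [|f| = alpha] to [|f| <= alpha] without
   zeros, then [f + r (h - f)] on [|f| <= alpha], with [r] the radial retraction
   onto the [alpha]-ball, glued with [f] outside, is a root-free
   [alpha]-perturbation.  Conversely, a root-free perturbation [g] yields the
   extension [f + t (g - f)], where [t = min 1 ((alpha - |f|) / |g|)] vanishes on
   the sphere; a zero of it would force [|f| = alpha / (2 - t) <= t alpha], which
   is impossible for [t < 1]. *)

Section NormOnRowVectors.
Variables (R : realType) (n : nat) (N : 'rV[R]_n -> R).
Hypothesis hN : is_norm N.

Lemma isnorm_eq0 x : N x = 0 -> x = 0.
Proof. by case: hN => + _ _; apply. Qed.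

Lemma isnormZ a x : N (a *: x) = `|a| * N x.
Proof. by case: hN. Qed.

Lemma isnormD x y : N (x + y) <= N x + N y.
Proof. by case: hN. Qed.

Lemma isnorm0 : N 0 = 0.
Proof. by rewrite -(scale0r (0 : 'rV[R]_n)) isnormZ normr0 mul0r. Qed.

Lemma isnormN x : N (- x) = N x.
Proof. by rewrite -scaleN1r isnormZ normrN normr1 mul1r. Qed.

Lemma isnorm_ge0 x : 0 <= N x.
Proof. by have := isnormD x (- x); rewrite subrr isnorm0 isnormN; lra. Qed.

Lemma isnorm_dist_dist x y : `|N x - N y| <= N (x - y).
Proof.
have h1 := isnormD (x - y) y; rewrite subrK in h1.
have h2 := isnormD (y - x) x; rewrite subrK -opprB isnormN in h2.
by rewrite ler_norml; apply/andP; split; lra.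
Qed.

Lemma isnorm_le_mx_norm x : N x <= (\sum_(j < n) N (delta_mx 0 j)) * `|x|.
Proof.
rewrite {1}(row_sum_delta x) mulr_suml.
elim/big_rec2: _ => [|j y z _ IH]; first by rewrite isnorm0.
apply: le_trans (isnormD _ _) (lerD _ IH).
rewrite isnormZ mulrC ler_wpM2l ?isnorm_ge0 // [`|x|]mx_normrE.
exact: (le_bigmax _ (fun ij : 'I_1 * 'I_n => `|x ij.1 ij.2|) (0, j)).
Qed.

(* Being dominated by a multiple of the sup norm, [N] is Lipschitz. *)
Lemma isnorm_continuous : continuous N.
Proof.
move=> x; apply/(@cvgrPdist_le _ R^o _ _ (nbhs_filter x)) => e e0.
set C := \sum_(j < n) N (delta_mx 0 j).
have C0 : 0 <= C by apply: sumr_ge0 => j _; exact: isnorm_ge0.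
apply/(@nbhs_normP R 'rV[R]_n); exists (e / (C + 1)) => /=.
  by rewrite divr_gt0 // ltr_wpDl.
move=> y /= xy_small.
apply: le_trans (isnorm_dist_dist _ _) (le_trans (isnorm_le_mx_norm _) _).
have : `|x - y| * (C + 1) < e by rewrite -ltr_pdivlMr // ltr_wpDl.
rewrite -/C; have := normr_ge0 (x - y); nra.
Qed.

Variables (alpha : R).
Hypothesis alpha_gt0 : 0 < alpha.

Definition ball_retract (w : 'rV[R]_n) := (alpha / Num.max alpha (N w)) *: w.

Lemma ball_retract_le w : N (ball_retract w) <= alpha.
Proof.
have M0 : 0 < Num.max alpha (N w) by rewrite lt_max alpha_gt0.
rewrite isnormZ ger0_norm; last by rewrite divr_ge0 // ltW.
rewrite mulrAC ler_pdivrMr // ler_pM2l //.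
by rewrite le_max lexx orbT.
Qed.

Lemma ball_retract_id w : N w <= alpha -> ball_retract w = w.
Proof.
by move=> Nw; rewrite /ball_retract max_l // divff ?gt_eqF // scale1r.
Qed.

Lemma ball_retract_continuous : continuous ball_retract.
Proof.
move=> w; apply: (@continuousZ _ _ _ _ id); last exact: cvg_id.
apply: (continuousM (s := fun=> alpha) (t := fun x => (Num.max alpha (N x))^-1)).
  exact: cst_continuous.
apply: continuousV; first by rewrite gt_eqF // lt_max alpha_gt0.
apply: (continuous_max (f := fun=> alpha)); first exact: cst_continuous.
exact: isnorm_continuous.
Qed.

Lemma addr_ball_retract_neq0 u v : N u <= alpha -> v != 0 ->
  (N u = alpha -> v = u) -> u + ball_retract (v - u) != 0.
Proof.
move=> Nu v0 sphere_vu; have [Nvu|alpha_lt] := leP (N (v - u)) alpha.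
  by rewrite ball_retract_id // addrC subrK.
rewrite addrC addr_eq0; apply/eqP => retr_vu.
have d0 : 0 < N (v - u) by apply: lt_trans alpha_lt.
have : N u = alpha.
  rewrite -isnormN -retr_vu /ball_retract isnormZ max_r; last exact: ltW.
  by rewrite ger0_norm ?divfK ?gt_eqF // divr_ge0 // ltW.
by move/sphere_vu => vu; rewrite vu subrr isnorm0 ltxx in d0.
Qed.

Lemma addr_scale_toward_neq0 u w : N u <= alpha -> w != 0 ->
  N (w - u) <= alpha -> u + Num.min 1 ((alpha - N u) / N w) *: (w - u) != 0.
Proof.
move=> Nu w0 Nwu; have Nw0 : 0 < N w.
  rewrite lt_neqAle isnorm_ge0 andbT eq_sym.
  by apply: contra w0 => /eqP/isnorm_eq0->.
set t := (alpha - N u) / N w.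
have [_|t_lt1] := leP 1 t; first by rewrite scale1r addrC subrK.
rewrite addrC addr_eq0; apply/eqP => tw_u.
have t0 : 0 <= t by rewrite divr_ge0 ?subr_ge0 // ltW.
have tNw : t * N w = alpha - N u by rewrite divfK // gt_eqF.
have tNwu : t * N (w - u) = N u by rewrite -(ger0_norm t0) -isnormZ tw_u isnormN.
have tw : t *: w = - ((1 - t) *: u).
  by rewrite -(subrK u w) scalerDr tw_u scalerBl scale1r opprB addrC.
have t1 : 0 <= 1 - t by rewrite subr_ge0 ltW.
have tNw' : t * N w = (1 - t) * N u.
  by move: (congr1 N tw); rewrite isnormN !isnormZ (ger0_norm t0) (ger0_norm t1).
have Nu_le : N u <= t * alpha by rewrite -tNwu ler_wpM2l.
(* [tNw] and [tNw'] give [N u = alpha / (2 - t)], so [Nu_le] says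
   [(1 - t)^2 alpha <= 0]. *)
have : 0 < (1 - t) * (1 - t) * alpha by rewrite !mulr_gt0 // subr_gt0.
nra.
Qed.

End NormOnRowVectors.

Lemma continuous_if_le (T U : topologicalType) (R : realType) (phi : T -> R)
    (c : R) (u v : T -> U) :
  continuous phi -> {within [set x | phi x <= c], continuous u} ->
  continuous v -> (forall x, phi x = c -> u x = v x) ->
  continuous (fun x => if phi x <= c then u x else v x).
Proof.
move=> phi_cont u_cont v_cont uv; set w := fun x => _.
have closed_phi (D : set R) : closed D -> closed (phi @^-1` D).
  by move=> D_closed; apply: preimage_closed => // x _; exact: phi_cont.
have := @withinU_continuous _ _ _ [set x | c <= phi x] w
  (closed_phi _ (@closed_le _ c)) (closed_phi _ (@closed_ge _ c)).
have -> : [set x | phi x <= c] `|` [set x | c <= phi x] = [set: T].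
  apply/seteqP; split => // x _.
  by case: (leP (phi x) c) => /= ?; [left | right; exact: ltW].
move=> w_cont x; have := w_cont _ _ x.
rewrite /continuous_at nbhs_subspaceT; apply.
- apply: subspace_eq_continuous u_cont => x' /[!inE] /= le_c.
  by rewrite /from_subspace /w /= le_c.
- apply: (@subspace_eq_continuous _ [set x | c <= phi x] _ v); last first.
    exact: continuous_subspaceT.
  move=> x' /[!inE] /= ge_c; rewrite /from_subspace /w /=; case: ifP => // le_c.
  by rewrite -uv //; apply/eqP; rewrite eq_le le_c ge_c.
Qed.

Section PerturbationsAndExtensions.
Variables (R : realType) (n : nat) (K : topologicalType) (N : 'rV[R]_n -> R).
Variables (f : K -> 'rV[R]_n) (alpha : R).
Hypotheses (hN : is_norm N) (f_cont : continuous f) (alpha_gt0 : 0 < alpha).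

Lemma isnorm_comp_continuous (u : K -> 'rV[R]_n) :
  continuous u -> continuous (fun x => N (u x)).
Proof.
by move=> u_cont x; apply: continuous_comp (u_cont x) _; exact: isnorm_continuous.
Qed.

Lemma rootless_perturbation_of_extension (h : K -> 'rV[R]_n) :
  {within [set x | N (f x) <= alpha], continuous h} ->
  (forall x, N (f x) <= alpha -> h x != 0) ->
  (forall x, N (f x) = alpha -> h x = f x) ->
  exists2 g, perturbation N alpha f g & forall x, g x != 0.
Proof.
move=> h_cont h_neq0 h_sphere.
pose g x :=
  if N (f x) <= alpha then f x + ball_retract N alpha (h x - f x) else f x.
exists g; first split.
- apply: continuous_if_le => //; first exact: isnorm_comp_continuous.
    move=> x; apply: cvgD; first exact: continuous_subspaceT.
    apply: cvg_comp; last exact: ball_retract_continuous.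
    by apply: cvgB; [exact: h_cont | exact: continuous_subspaceT].
  move=> x /h_sphere->; rewrite subrr ball_retract_id ?addr0 //.
  by rewrite isnorm0 // ltW.
- move=> x; rewrite /g; case: ifP => _; last by rewrite subrr isnorm0 // ltW.
  by rewrite addrC addKr; exact: ball_retract_le.
- move=> x; rewrite /g; case: ifP => Nfx.
    by apply: addr_ball_retract_neq0 => //; [exact: h_neq0 | exact: h_sphere].
  by apply: contraFneq Nfx => ->; rewrite isnorm0 // ltW.
Qed.

Lemma extension_of_rootless_perturbation g :
  perturbation N alpha f g -> (forall x, g x != 0) ->
  exists h : K -> 'rV[R]_n,
    [/\ {within [set x | N (f x) <= alpha], continuous h},
        (forall x, N (f x) <= alpha -> h x != 0)
      & (forall x, N (f x) = alpha -> h x = f x)].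
Proof.
move=> [g_cont g_near] g_neq0.
have Ng_neq0 x : N (g x) != 0.
  by apply: contra (g_neq0 x) => /eqP/(isnorm_eq0 hN)->.
pose t x := Num.min 1 ((alpha - N (f x)) / N (g x)).
exists (fun x => f x + t x *: (g x - f x)); split.
- apply: continuous_subspaceT => x; apply: cvgD; first exact: f_cont.
  apply: cvgZ; last by apply: cvgB; [exact: g_cont | exact: f_cont].
  apply: (continuous_min (f := fun=> 1) (g := fun x => (alpha - N (f x)) / N (g x))).
    exact: cst_continuous.
  apply: cvgM; first by apply: cvgB; [exact: cvg_cst | exact: isnorm_comp_continuous].
  by apply: cvgV; [exact: Ng_neq0 | exact: isnorm_comp_continuous].
- by move=> x Nfx; apply: addr_scale_toward_neq0 => //; exact: g_near.
- by move=> x Nfx; rewrite /t Nfx subrr mul0r min_r ?ler01 // scale0r addr0.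
Qed.

End PerturbationsAndExtensions.

Theorem lemma3p3 (R : realType) (n : nat) (K : topologicalType)
  (hK : compact [set: K]) (hH : hausdorff_space K)
  (N : 'rV[R]_n -> R) (hN : is_norm N)
  (f : K -> 'rV[R]_n) (hf : continuous f) (alpha : R) (halpha : 0 < alpha) :
  (forall g : K -> 'rV[R]_n, perturbation N alpha f g -> exists x : K, g x = 0)
  <->
  ~ (exists h : K -> 'rV[R]_n,
       [/\ {within [set x | N (f x) <= alpha], continuous h},
           (forall x, N (f x) <= alpha -> h x != 0)
         & (forall x, N (f x) = alpha -> h x = f x)]).
Proof.
split.
- move=> perturbations_vanish [h [h_cont h_neq0 h_sphere]].
  have [g g_pert g_neq0] :=
    rootless_perturbation_of_extension hN hf halpha h_cont h_neq0 h_sphere.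
  by have [x /eqP] := perturbations_vanish g g_pert; rewrite (negbTE (g_neq0 x)).
- move=> no_extension g g_pert; apply: contrapT => g_rootless.
  apply/no_extension/(extension_of_rootless_perturbation hN hf halpha g_pert) => x.
  by apply/eqP => gx0; apply: g_rootless; exists x.
Qed.
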